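(* Let $p,q,r\in\mathrm{sylv}_\infty$ with $\mathrm{ev}(p)=\mathrm{ev}(q)\leqslant\mathrm{ev}(r)$. Then $pr=qr$ in $\mathrm{sylv}_\infty$.
   Context: Let $\mathcal{A}=\{1<2<3<\cdots\}$. A right strict binary search tree is a labelled rooted binary tree (labels in $\mathcal{A}$) in which each node's label is $\ge$ every label in its left subtree and $<$ every label in its right subtree. Inserting $a$ into such a tree $T$: if $T$ is empty, create a node labelled $a$; otherwise, with root label $x$, recursively insert $a$ into the right subtree if $a>x$ and into the left subtree otherwise. For $w=w_1\cdots w_k\in\mathcal{A}^*$, $\mathrm{P}(w)$ is obtained from the empty tree by inserting $w_k,\dots,w_1$ in this order. The sylvester monoid $\mathrm{sylv}_\infty$ is $\mathcal{A}^*/{\equiv}$ where $u\equiv v\iff \mathrm{P}(u)=\mathrm{P}(v)$ (a congruence). The evaluation $\mathrm{ev}(u)$ of a word $u$ is the tuple $(|u|_a)_{a\in\mathcal{A}}$, $|u|_a$ being the number of occurrences of $a$ in $u$; equivalent words have the same evaluation, so $\mathrm{ev}$ is defined on $\mathrm{sylv}_\infty$. $\mathrm{ev}(u)\leqslant\mathrm{ev}(v)$ means $|u|_a\le|v|_a$ for every $a$. *)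

From mathcomp Require Import all_boot.
Set Implicit Arguments. Unset Strict Implicit. Unset Printing Implicit Defensive.

(* Alphabet A = {1 < 2 < 3 < ...}: letters are nats, a word is in A^* iff
   all its letters are positive. *)
Definition word_A (w : seq nat) : bool := all (fun a => 0 < a) w.

Inductive tree : Type := Leaf | Node of tree & nat & tree.

Fixpoint insert (a : nat) (t : tree) : tree :=
  match t with
  | Leaf => Node Leaf a Leaf
  | Node l x r => if x < a then Node l x (insert a r) else Node (insert a l) x r
  end.

Definition P (w : seq nat) : tree := foldr insert Leaf w.

Definition sylv_eq (u v : seq nat) : Prop := P u = P v.

Definition ev (u : seq nat) : nat -> nat := fun a => count_mem a u.

Definition ev_eq (u v : seq nat) : Prop := forall a, ev u a = ev v a.
Definition ev_le (u v : seq nat) : Prop := forall a, ev u a <= ev v a.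

From mathcomp Require Import all_boot.
Set Implicit Arguments. Unset Strict Implicit. Unset Printing Implicit Defensive.

(* Call a letter present in a tree when a binary search for it succeeds.
   Insertions of two present letters a < b commute: their search paths agree
   down to the first node x with a <= x < b, which exists because a is
   present, and below x they act on disjoint subtrees. Insertion never removes
   a present letter, and every letter of p is present in P(r) because
   ev(p) <= ev(r). So P(pr) is obtained from P(r) by inserting the letters of
   p in an order that does not matter, and q is a permutation of p. *)

(* Unlike occurring as a label, this notion survives every insertion, even
   into trees that are not search trees. *)
Fixpoint bst_mem (c : nat) (t : tree) : bool :=
  match t with
  | Leaf => false
  | Node l x r => (c == x) || (if x < c then bst_mem c r else bst_mem c l)
  end.

Lemma bst_mem_insert c a t : bst_mem c t -> bst_mem c (insert a t).
Proof.
elim: t => [//|l IHl x r IHr] /=.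
case/orP=> [/eqP <- | mem_c]; first by case: ifP; rewrite /= eqxx.
by case: ifP => _; case: ifP mem_c => /= xc mem_c; rewrite xc ?IHl ?IHr ?mem_c ?orbT.
Qed.

Lemma bst_mem_insert_self a t : bst_mem a (insert a t).
Proof.
elim: t => [|l IHl x r IHr] /=; first by rewrite eqxx.
by case: ifP => xa /=; rewrite xa ?IHl ?IHr orbT.
Qed.

Lemma insertC_lt a b t : a < b -> bst_mem a t ->
  insert a (insert b t) = insert b (insert a t).
Proof.
move=> ab; elim: t => [//|l IHl x r IHr] /=.
have [xa | ax] := ltnP x a.
  have xb := ltn_trans xa ab.
  by rewrite xb /= xa xb gtn_eqF //= => /IHr ->.
have [xb | bx] := ltnP x b; first by rewrite /= ltnNge ax xb.
rewrite /= !ltnNge ax bx /= ltn_eqF ?(leq_trans ab) //=.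
by move=> /IHl ->.
Qed.

Lemma insertC a b t : bst_mem a t -> bst_mem b t ->
  insert a (insert b t) = insert b (insert a t).
Proof.
move=> mem_a mem_b; case: (ltngtP a b) => [ab | ba | ->] //; first exact: insertC_lt.
by symmetry; apply: insertC_lt.
Qed.

Lemma bst_mem_foldr c s t : bst_mem c t -> bst_mem c (foldr insert t s).
Proof. by elim: s => //= a s IHs /IHs; apply: bst_mem_insert. Qed.

Lemma mem_bst_mem_foldr c s t : c \in s -> bst_mem c (foldr insert t s).
Proof.
elim: s => //= a s IHs; rewrite inE => /predU1P[-> | /IHs]; last exact: bst_mem_insert.
exact: bst_mem_insert_self.
Qed.

Lemma foldr_insertC a s t : bst_mem a t -> all (bst_mem^~ t) s ->
  foldr insert (insert a t) s = insert a (foldr insert t s).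
Proof.
move=> mem_a; elim: s => //= b s IHs /andP[mem_b mem_s].
by rewrite IHs // insertC // bst_mem_foldr.
Qed.

Lemma perm_foldr_insert s1 s2 t : perm_eq s1 s2 -> all (bst_mem^~ t) s1 ->
  foldr insert t s1 = foldr insert t s2.
Proof.
elim: s1 s2 => [|a s1 IHs] s2; first by rewrite perm_sym => /perm_nilP ->.
move=> perm_s12 mem_s12.
have a_s2 : a \in s2 by rewrite -(perm_mem perm_s12) mem_head.
case/splitPr: a_s2 perm_s12 mem_s12 => u v perm_s12.
have perm_s1 : perm_eq s1 (u ++ v).
  by rewrite -(perm_cons a) (permPl perm_s12) -cat1s perm_catCA.
rewrite (perm_all _ perm_s12) all_cat /= => /and3P[mem_u mem_a mem_v].
rewrite /= (IHs _ perm_s1); last by rewrite (perm_all _ perm_s1) all_cat mem_u mem_v.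
rewrite !foldr_cat /= foldr_insertC ?bst_mem_foldr //.
by apply/allP => c /(allP mem_u); apply: bst_mem_foldr.
Qed.

Lemma ev_eq_perm u v : ev_eq u v -> perm_eq u v.
Proof. by move=> ev_uv; apply/allP => c _; apply/eqP/ev_uv. Qed.

Lemma ev_le_subset u v : ev_le u v -> {subset u <= v}.
Proof.
by move=> ev_uv c; rewrite -!has_pred1 !has_count => /leq_trans; apply; apply: ev_uv.
Qed.

Theorem lemma4p4 (p q r : seq nat) :
  word_A p -> word_A q -> word_A r ->
  ev_eq p q -> ev_le q r ->
  sylv_eq (p ++ r) (q ++ r).
Proof.
move=> _ _ _ ev_pq ev_qr; have perm_pq := ev_eq_perm ev_pq.
rewrite /sylv_eq /P !foldr_cat; apply: perm_foldr_insert => //.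
apply/allP => c c_p; apply/mem_bst_mem_foldr/(ev_le_subset ev_qr).
by rewrite -(perm_mem perm_pq).
Qed.
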